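(* Let $(\Omega,\mathcal F)$ be a measurable space, $w$ a capacity, $X$ a bounded measurable function, and $\alpha\in(0,1)$. Then $$\big[\mathrm{VaR}^w_\alpha(X),\overline{\mathrm{VaR}}^w_\alpha(X)\big]=\operatorname*{argmin}_{x\in\mathbb R}\Big\{x+\frac1\alpha\int(X-x)_+\,\mathrm dw\Big\},\qquad \mathrm{ES}^w_\alpha(X)=\min_{x\in\mathbb R}\Big\{x+\frac1\alpha\int(X-x)_+\,\mathrm dw\Big\}.$$
   Context: A capacity is an increasing function $w:\mathcal F\to\mathbb R$ with $w(\varnothing)=0$, $w(\Omega)=1$. For a bounded measurable $Y$, $\int Y\,\mathrm dw=\int_{-\infty}^0(w(Y\ge y)-1)\,\mathrm dy+\int_0^\infty w(Y\ge y)\,\mathrm dy$ (Choquet integral). $\mathrm{VaR}^w_t(X)=\inf\{x\in\mathbb R:w(X\ge x)\le t\}$ and $\overline{\mathrm{VaR}}^w_t(X)=\inf\{x\in\mathbb R:w(X\ge x)<t\}$; $\mathrm{ES}^w_\alpha(X)=\frac1\alpha\int_0^\alpha\mathrm{VaR}^w_t(X)\,\mathrm dt$. $(y)_+=\max(y,0)$. *)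

From HB Require Import structures.
From mathcomp Require Import all_boot all_order all_algebra.
From mathcomp Require Import all_classical all_reals all_analysis.
Set Implicit Arguments. Unset Strict Implicit. Unset Printing Implicit Defensive.
Import Order.TTheory GRing.Theory Num.Theory.
Import numFieldNormedType.Exports.
Local Open Scope classical_set_scope.
Local Open Scope ring_scope.

Section Capacity.
Context {d : measure_display} {T : measurableType d} {R : realType}.

(* A capacity: increasing on measurable sets, w(empty)=0, w(Omega)=1.
   (w is given on all of set T, but only its values on measurable sets matter.) *)
Definition is_capacity (w : set T -> R) : Prop :=
  [/\ w set0 = 0, w setT = 1 &
      forall A B, measurable A -> measurable B -> A `<=` B -> w A <= w B].

Definition choquet (w : set T -> R) (Y : T -> R) : R :=
  (\int[lebesgue_measure]_(y in `]-oo, 0[) (w [set om | y <= Y om] - 1))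
  + (\int[lebesgue_measure]_(y in `[0, +oo[) (w [set om | y <= Y om])).

Definition VaR (w : set T -> R) (t : R) (X : T -> R) : R :=
  inf [set x : R | w [set om | x <= X om] <= t].

Definition VaRbar (w : set T -> R) (t : R) (X : T -> R) : R :=
  inf [set x : R | w [set om | x <= X om] < t].

Definition ES (w : set T -> R) (a : R) (X : T -> R) : R :=
  a^-1 * (\int[lebesgue_measure]_(t in `[0, a]) VaR w t X).

Definition ES_objective (w : set T -> R) (a : R) (X : T -> R) (x : R) : R :=
  x + a^-1 * choquet w (fun om => Num.max (X om - x) 0).

End Capacity.

From HB Require Import structures.
From mathcomp Require Import all_boot all_order all_algebra.
From mathcomp Require Import all_classical all_reals all_analysis.
From mathcomp Require Import measurable_realfun ring lra.
Set Implicit Arguments. Unset Strict Implicit. Unset Printing Implicit Defensive.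
Import Order.TTheory GRing.Theory Num.Theory.
Import numFieldNormedType.Exports.
Local Open Scope classical_set_scope.
Local Open Scope ring_scope.

(* Write G(s) = w(X >= s): it is nonincreasing, equal to 1 below -M and to 0
   above M when |X| <= M, and a change of variable turns the Choquet integral
   of (X - x)_+ into the stop-loss transform K(x) = int_x^oo G.  Since
   K(x) - K(y) = int_x^y G, the function a x + K(x) decreases while G > a and
   increases while G < a, so its minimisers are exactly the points where G
   crosses the level a, i.e. [VaR_a, VaRbar_a].
   For the minimum value, Psi(a) = int_0^a VaR_t dt and
   phi(a) = a VaR_a + K(VaR_a) both have increments over [a, b] between
   VaR_b (b - a) and VaR_a (b - a) (for phi by minimality of VaR_a and VaR_b).
   Hence phi - Psi has increments bounded by (VaR_a - VaR_b)(b - a), which sum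
   to an arbitrarily small quantity over fine subdivisions of [0, alpha]; as
   phi(0) = Psi(0) = 0, this gives alpha ES_alpha = phi(alpha). *)

Section lebesgue_measure_shift.
Context {R : realType}.
Local Notation mu := (@lebesgue_measure R).

Lemma measurable_shift (c : R) : measurable_fun setT (shift c).
Proof. by apply: measurable_funD => //; exact: measurable_cst. Qed.

Lemma lebesgue_measure_shift (c : R) (A : set R) : measurable A ->
  mu (shift c @^-1` A) = mu A.
Proof.
move=> mA; change (pushforward mu (shift c : R -> measurableTypeR R) A = mu A).
apply/esym/lebesgue_measure_unique => //; first exact: measurable_shift.
move=> _ _ [[a b]] _ <- /=; rewrite /pushforward.
have -> : shift c @^-1` `]a, b]%classic = `]a - c, b - c]%classic.
  by apply/seteqP; split => s; rewrite /= /shift !in_itv /= ltrBlDr lerBrDr.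
rewrite !lebesgue_measure_itv /= !lte_fin ltrD2r.
by case: ifP => // _; rewrite -!EFinD; congr EFin; ring.
Qed.

Lemma ge0_integral_shift (c : R) (D : set R) (f : R -> \bar R) : measurable D ->
  measurable_fun D f -> (forall u, D u -> 0 <= f u)%E ->
  (\int[mu]_(s in shift c @^-1` D) (f \o shift c) s = \int[mu]_(u in D) f u)%E.
Proof.
move=> mD mf f0.
rewrite -(@ge0_integral_pushforward _ _ (measurableTypeR R) (measurableTypeR R)
  _ _ (measurable_shift c) mu D f) //.
- apply: eq_measure_integral; first exact: measurable_shift.
  by move=> ? A mA _; exact: lebesgue_measure_shift.
- by move=> u /set_mem /f0.
Qed.

End lebesgue_measure_shift.

Section Rintegral_itv_oo_cst.
Context {R : realType}.
Local Notation mu := (@lebesgue_measure R).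
Variables (f : R -> R) (x y : R).
Hypotheses (le_xy : x <= y) (f_int : mu.-integrable `]x, y[ (EFin \o f)).

Let fine_lebesgue_measure_itv_oo : fine (mu `]x, y[) = y - x.
Proof.
rewrite lebesgue_measure_itv /= lte_fin; case: ltP => //= yx.
have -> : x = y by apply/eqP; rewrite eq_le le_xy yx.
by rewrite subrr.
Qed.

Let integrable_cst (c : R) : mu.-integrable `]x, y[ (EFin \o cst c).
Proof.
apply: measurable_bounded_integrable => //; last exact: bounded_cst.
by rewrite /= lebesgue_measure_itv; case: ifP => // _; rewrite ltry.
Qed.

Lemma Rintegral_itv_oo_le_cst (c : R) : (forall s, x < s < y -> f s <= c) ->
  \int[mu]_(u in `]x, y[) f u <= c * (y - x).
Proof.
move=> fc; rewrite -fine_lebesgue_measure_itv_oo -Rintegral_cst //.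
by apply: le_Rintegral => //; exact: integrable_cst.
Qed.

Lemma Rintegral_itv_oo_ge_cst (c : R) : (forall s, x < s < y -> c <= f s) ->
  c * (y - x) <= \int[mu]_(u in `]x, y[) f u.
Proof.
move=> fc; rewrite -fine_lebesgue_measure_itv_oo -Rintegral_cst //.
by apply: le_Rintegral => //; exact: integrable_cst.
Qed.

End Rintegral_itv_oo_cst.

Section dominated_increments.
Context {R : realType}.

Lemma le0_of_natmul_bounded (e c : R) :
  (forall n, (0 < n)%N -> e * n%:R <= c) -> e <= 0.
Proof.
move=> ec; rewrite leNgt; apply/negP => e0.
have := ec (Num.truncn (c / e)).+1 isT.
rewrite mulrC -ler_pdivlMr // => /(lt_le_trans (truncnS_gt _)).
by rewrite ltxx.
Qed.

(* Comparing [D] along the grid [k * l / n] telescopes the bounds into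
   [|D l - D 0| <= (v 0 - v l) * l / n]. *)
Lemma dominated_increments_eq (D v : R -> R) (l : R) : 0 < l ->
  (forall a b, 0 <= a -> a <= b -> b <= l ->
     `|D b - D a| <= (v a - v b) * (b - a)) ->
  D l = D 0.
Proof.
move=> l0 Dv; apply/eqP; rewrite -subr_eq0 -normr_eq0 eq_le normr_ge0 andbT.
apply: (le0_of_natmul_bounded (c := (v 0 - v l) * l)) => n n0.
have n0' : (0 : R) < n%:R by rewrite ltr0n.
pose h := l / n%:R.
have h0 : 0 < h by rewrite divr_gt0.
have nh : n%:R * h = l by rewrite /h mulrC divfK // gt_eqF.
suff grid k : (k <= n)%N ->
    `|D (k%:R * h) - D 0| <= (v 0 - v (k%:R * h)) * h.
  have := grid n (leqnn n); rewrite nh => Dn.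
  by rewrite -[in X in _ <= _ * X]nh mulrCA [X in _ <= X]mulrC ler_pM2r.
elim: k => [|k IHk] kn; first by rewrite mul0r !subrr normr0 mul0r.
have kh0 : 0 <= k%:R * h by rewrite mulr_ge0 // ltW.
have kh1 : k.+1%:R * h = k%:R * h + h by rewrite -addn1 natrD mulrDl mul1r.
have k1l : k.+1%:R * h <= l by rewrite -nh ler_pM2r // ler_nat.
have kk1 : k%:R * h <= k.+1%:R * h by rewrite kh1 lerDl ltW.
have := Dv _ _ kh0 kk1 k1l.
have := IHk (ltnW kn).
have := ler_distD (D (k%:R * h)) (D (k.+1%:R * h)) (D 0).
rewrite kh1 addrAC subrr add0r; lra.
Qed.

End dominated_increments.

Lemma upclosed_gt_inf {R : realType} (S : set R) (s : R) : has_inf S ->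
  (forall x y, S x -> x <= y -> S y) -> inf S < s -> S s.
Proof.
move=> hS Sup Ss.
have [e Se] := @inf_adherent _ S (s - inf S) ltac:(by rewrite subr_gt0) hS.
by rewrite addrC subrK => /ltW; exact: Sup.
Qed.

Section stop_loss.
Context {R : realType}.
Local Notation mu := (@lebesgue_measure R).

Definition lower_quantile (G : R -> R) (a : R) := inf [set x | G x <= a].
Definition upper_quantile (G : R -> R) (a : R) := inf [set x | G x < a].
Definition stop_loss (G : R -> R) (x : R) := \int[mu]_(u in `]x, +oo[) G u.

Definition tail_function (G : R -> R) (M : R) :=
  [/\ nonincreasing_fun G, forall s, 0 <= G s <= 1,
      forall s, s <= - M -> G s = 1 & forall s, M < s -> G s = 0].

Variables (G : R -> R) (M : R).
Hypothesis G_tail : tail_function G M.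

Let G_ni : nonincreasing_fun G. Proof. by case: G_tail. Qed.
Let G_ge0 s : 0 <= G s. Proof. by case: G_tail => _ /(_ s) /andP[]. Qed.
Let G_le1 s : G s <= 1. Proof. by case: G_tail => _ /(_ s) /andP[]. Qed.
Let G_left s : s <= - M -> G s = 1. Proof. by case: G_tail => _ _ /(_ s). Qed.
Let G_right s : M < s -> G s = 0. Proof. by case: G_tail => _ _ _ /(_ s). Qed.

Local Notation v := (lower_quantile G).
Local Notation vb := (upper_quantile G).
Local Notation K := (stop_loss G).

Section quantiles.
Variable a : R.

Let nonempty_level (P : pred R) : P 0 -> nonempty [set x | P (G x)].
Proof. by move=> P0; exists (M + 1); rewrite /= G_right ?ltrDl. Qed.

Let lbound_level (P : pred R) : ~~ P 1 -> lbound [set x | P (G x)] (- M).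
Proof.
move=> P1 x /= Px; rewrite leNgt; apply/negP => /ltW /G_left Gx1.
by move: Px; rewrite Gx1 (negbTE P1).
Qed.

Let has_inf_le : 0 <= a -> a < 1 -> has_inf [set x | G x <= a].
Proof.
move=> a0 a1; split; first exact: (@nonempty_level (<= a)).
by exists (- M); apply: (@lbound_level (<= a)); rewrite /= -ltNge.
Qed.

Let has_inf_lt : 0 < a -> a <= 1 -> has_inf [set x | G x < a].
Proof.
move=> a0 a1; split; first exact: (@nonempty_level (< a)).
by exists (- M); apply: (@lbound_level (< a)); rewrite /= -leNgt.
Qed.

Lemma gt_lower_quantile_le s : 0 <= a -> a < 1 -> v a < s -> G s <= a.
Proof.
move=> a0 a1; apply: upclosed_gt_inf; first exact: has_inf_le.
by move=> x y Gx /G_ni Gyx; exact: le_trans Gyx Gx.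
Qed.

Lemma lt_lower_quantile_gt s : 0 <= a -> a < 1 -> s < v a -> a < G s.
Proof.
move=> a0 a1 sv; rewrite ltNge; apply/negP => Gs.
have [_ hlb] := has_inf_le a0 a1.
by move: sv; rewrite ltNge ge_inf.
Qed.

Lemma gt_upper_quantile_lt s : 0 < a -> a <= 1 -> vb a < s -> G s < a.
Proof.
move=> a0 a1; apply: upclosed_gt_inf; first exact: has_inf_lt.
by move=> x y Gx /G_ni Gyx; exact: le_lt_trans Gyx Gx.
Qed.

Lemma lt_upper_quantile_ge s : 0 < a -> a <= 1 -> s < vb a -> a <= G s.
Proof.
move=> a0 a1 sv; rewrite leNgt; apply/negP => Gs.
have [_ hlb] := has_inf_lt a0 a1.
by move: sv; rewrite ltNge ge_inf.
Qed.

Lemma lower_quantile_itv : 0 <= a -> a < 1 -> - M <= v a <= M.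
Proof.
move=> a0 a1; apply/andP; split.
  apply: lb_le_inf; first exact: (@nonempty_level (<= a)).
  by apply: (@lbound_level (<= a)); rewrite /= -ltNge.
rewrite leNgt; apply/negP => Mv.
have := lt_lower_quantile_gt (s := (M + v a) / 2) a0 a1 ltac:(lra).
by rewrite G_right ?ltNge ?a0 //; lra.
Qed.

End quantiles.

Lemma lower_quantile_nonincreasing a b :
  0 <= a -> a <= b -> b < 1 -> v b <= v a.
Proof.
move=> a0 ab b1; rewrite leNgt; apply/negP => vab.
have := gt_lower_quantile_le (s := (v a + v b) / 2) a0 (le_lt_trans ab b1)
  ltac:(lra).
have := lt_lower_quantile_gt (s := (v a + v b) / 2) (le_trans a0 ab) b1
  ltac:(lra).
lra.
Qed.

Let measurable_G : measurable_fun setT G.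
Proof. exact: nonincreasing_measurable. Qed.

Lemma integrable_itv_oy x : mu.-integrable `]x, +oo[ (EFin \o G).
Proof.
pose y := Num.max x M.
apply: (@le_integrable _ _ _ mu _ _ _ (EFin \o \1_`]x, y]%classic)) => //.
- by apply/measurable_EFinP; exact: measurable_funTS.
- move=> u; rewrite /= in_itv /= andbT => xu.
  rewrite lee_fin ger0_norm // indicE.
  have [uy|yu] := leP u y.
    by rewrite mem_set ?normr1 ?G_le1 //= in_itv /= xu uy.
  rewrite memNset ?normr0 ?G_right //; last first.
    by rewrite /= in_itv /= leNgt yu andbF.
  by apply: le_lt_trans yu; rewrite le_max lexx orbT.
- exact: integrableS (integrable_indic_itv _ _ _ _).
Qed.

Lemma integrable_itv_oo x y : mu.-integrable `]x, y[ (EFin \o G).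
Proof.
apply: integrableS (integrable_itv_oy x) => //.
by move=> u; rewrite /= !in_itv /= andbT => /andP[].
Qed.

Lemma stop_lossB x y : x <= y -> K x - K y = \int[mu]_(u in `]x, y[) G u.
Proof.
move=> xy; have := @Rintegral_itvB R G (BRight x) +oo%O y (integrable_itv_oy x).
rewrite !bnd_simp => /(_ xy isT) xyB.
rewrite /stop_loss -xyB opprB addrC subrK.
by rewrite Rintegral_itv_bndo_bndc // integrable_itv_oo.
Qed.

Lemma stop_lossB_le x y c : x <= y -> (forall s, x < s < y -> G s <= c) ->
  K x - K y <= c * (y - x).
Proof.
move=> xy Gc; rewrite stop_lossB //.
by apply: Rintegral_itv_oo_le_cst => //; exact: integrable_itv_oo.
Qed.

Lemma stop_lossB_ge x y c : x <= y -> (forall s, x < s < y -> c <= G s) ->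
  c * (y - x) <= K x - K y.
Proof.
move=> xy Gc; rewrite stop_lossB //.
by apply: Rintegral_itv_oo_ge_cst => //; exact: integrable_itv_oo.
Qed.

Lemma stop_loss_min_at_crossing a x :
  (forall s, x < s -> G s <= a) -> (forall s, s < x -> a <= G s) ->
  forall y, a * x + K x <= a * y + K y.
Proof.
move=> right_le left_ge y; have [xy|yx] := leP x y.
  have := stop_lossB_le xy (fun s sxy => right_le s (proj1 (andP sxy))); lra.
have := stop_lossB_ge (ltW yx) (fun s sxy => left_ge s (proj2 (andP sxy))); lra.
Qed.

Lemma stop_loss_min_lower_quantile a : 0 <= a -> a < 1 ->
  forall y, a * v a + K (v a) <= a * y + K y.
Proof.
move=> a0 a1; apply: stop_loss_min_at_crossing => s vs.
  exact: gt_lower_quantile_le.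
exact/ltW/lt_lower_quantile_gt.
Qed.

Lemma argmin_stop_loss a : 0 < a -> a < 1 ->
  [set x | forall y, a * x + K x <= a * y + K y] = `[v a, vb a]%classic.
Proof.
move=> a0 a1; apply/seteqP; split => x /=; rewrite in_itv /=; last first.
  case/andP => vx xvb; apply: stop_loss_min_at_crossing => s xs.
    exact: gt_lower_quantile_le (ltW a0) a1 (le_lt_trans vx xs).
  exact: lt_upper_quantile_ge a0 (ltW a1) (lt_le_trans xs xvb).
move=> xmin; rewrite !leNgt; apply/andP; split; apply/negP => xv.
  pose y := (x + v a) / 2.
  have Gy : a < G y.
    by apply: lt_lower_quantile_gt (ltW a0) a1 _; rewrite /y; lra.
  have xy : x <= y by rewrite /y; lra.
  have := stop_lossB_ge xy (fun s sxy => G_ni (ltW (proj2 (andP sxy)))).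
  have := xmin y; have : a * (y - x) < G y * (y - x).
    by rewrite ltr_pM2r // subr_gt0 /y; lra.
  lra.
pose y := (vb a + x) / 2.
have Gy : G y < a.
  by apply: gt_upper_quantile_lt a0 (ltW a1) _; rewrite /y; lra.
have yx : y <= x by rewrite /y; lra.
have := stop_lossB_le yx (fun s sxy => G_ni (ltW (proj1 (andP sxy)))).
have := xmin y; have : G y * (x - y) < a * (x - y).
  by rewrite ltr_pM2r // subr_gt0 /y; lra.
lra.
Qed.

Lemma stop_loss_lower_quantile0 : K (v 0) = 0.
Proof.
rewrite /stop_loss (@eq_Rintegral _ _ _ mu _ (fun=> 0)) ?Rintegral_cst ?mul0r //.
move=> s; rewrite inE /= in_itv /= andbT => vs.
by apply/eqP; rewrite eq_le G_ge0 gt_lower_quantile_le.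
Qed.

Section lower_quantile_integral.
Variable l : R.
Hypotheses (l_gt0 : 0 < l) (l_lt1 : l < 1).

Let clamp t := Num.min (Num.max t 0) l.

Let clamp_itv t : 0 <= clamp t <= l.
Proof. by rewrite /clamp le_min le_max lexx orbT ltW //= ge_min lexx orbT. Qed.

Let clamp_id t : 0 <= t <= l -> clamp t = t.
Proof. by case/andP => t0 tl; rewrite /clamp (max_idPl t0) (min_idPl tl). Qed.

Lemma integrable_lower_quantile : mu.-integrable `[0, l] (EFin \o v).
Proof.
have v_clamp_ni : nonincreasing_fun (v \o clamp).
  move=> s t st /=.
  have /andP[s0 _] := clamp_itv s; have /andP[_ tl] := clamp_itv t.
  apply: lower_quantile_nonincreasing => //; last exact: le_lt_trans tl l_lt1.
  by rewrite /clamp le_min2 // le_max2.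
apply: measurable_bounded_integrable => //.
- by rewrite /= lebesgue_measure_itv; case: ifP => // _; rewrite ltry.
- apply: eq_measurable_fun (nonincreasing_measurable _ v_clamp_ni) => //.
  by move=> t /set_mem; rewrite /= in_itv /= => /clamp_id ->.
exists M; split => [|B MB t]; first exact: num_real.
rewrite /= in_itv /= => /andP[t0 tl].
have := lower_quantile_itv t0 (le_lt_trans tl l_lt1).
by rewrite -ler_norml => /le_trans; apply; exact: ltW.
Qed.

Let Psi a := \int[mu]_(t in `[0, a]) v t.
Let phi a := a * v a + K (v a).

Let Psi_increment a b : 0 <= a -> a <= b -> b <= l ->
  v b * (b - a) <= Psi b - Psi a <= v a * (b - a).
Proof.
move=> a0 ab bl; have b1 := le_lt_trans bl l_lt1.
have sub_ab : `]a, b[ `<=` `[0, l]%classic.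
  move=> t; rewrite /= !in_itv /= => /andP[ta tb].
  by rewrite (le_trans a0 (ltW ta)) (le_trans (ltW tb) bl).
have int_b : mu.-integrable `[0, b] (EFin \o v).
  apply: integrableS integrable_lower_quantile => //.
  by apply: subset_itvl; rewrite bnd_simp.
have int_ab : mu.-integrable `]a, b[ (EFin \o v).
  exact: integrableS integrable_lower_quantile.
have -> : Psi b - Psi a = \int[mu]_(t in `]a, b[) v t.
  have := @Rintegral_itvB R v (BLeft 0) (BRight b) a int_b.
  by rewrite !bnd_simp => /(_ a0 ab) ->; rewrite Rintegral_itv_bndo_bndc.
apply/andP; split.
- apply: Rintegral_itv_oo_ge_cst => // s /andP[sa sb].
  exact: lower_quantile_nonincreasing (le_trans a0 (ltW sa)) (ltW sb) b1.
- apply: Rintegral_itv_oo_le_cst => // s /andP[sa sb].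
  exact: lower_quantile_nonincreasing a0 (ltW sa) (lt_trans sb b1).
Qed.

Let phi_increment a b : 0 <= a -> a <= b -> b <= l ->
  v b * (b - a) <= phi b - phi a <= v a * (b - a).
Proof.
move=> a0 ab bl; have b1 := le_lt_trans bl l_lt1.
have := stop_loss_min_lower_quantile a0 (le_lt_trans ab b1) (v b).
have := stop_loss_min_lower_quantile (le_trans a0 ab) b1 (v a).
rewrite /phi !mulrBr => min_b min_a; apply/andP; split; lra.
Qed.

Lemma Rintegral_lower_quantile :
  \int[mu]_(t in `[0, l]) v t = l * v l + K (v l).
Proof.
have phi_Psi0 : phi 0 - Psi 0 = 0.
  rewrite /phi /Psi mul0r add0r stop_loss_lower_quantile0.
  by rewrite set_itv1 Rintegral_set1 subrr.
suff : phi l - Psi l = phi 0 - Psi 0 by rewrite phi_Psi0 => /subr0_eq /esym.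
apply: (dominated_increments_eq (D := fun a => phi a - Psi a) (v := v)) => //.
move=> a b a0 ab bl.
have /andP[Psi_lb Psi_ub] := Psi_increment a0 ab bl.
have /andP[phi_lb phi_ub] := phi_increment a0 ab bl.
rewrite ler_norml mulrBl; apply/andP; split; lra.
Qed.

End lower_quantile_integral.

End stop_loss.

Section capacity_tail.
Context {d : measure_display} {T : measurableType d} {R : realType}.
Local Notation mu := (@lebesgue_measure R).
Variables (w : set T -> R) (X : T -> R).
Hypotheses (w_cap : is_capacity w) (mX : measurable_fun setT X).

(* [VaR w t X] and [VaRbar w t X] unfold to
   [lower_quantile (capacity_tail w X) t] and
   [upper_quantile (capacity_tail w X) t]. *)
Definition capacity_tail (s : R) := w [set om | s <= X om].

Let measurable_level s : measurable [set om | s <= X om].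
Proof.
have := mX measurableT (measurable_itv `[s, +oo[).
rewrite setTI; congr measurable.
by apply/seteqP; split => om; rewrite /= in_itv /= andbT.
Qed.

Lemma capacity_tail_nonincreasing : nonincreasing_fun capacity_tail.
Proof.
move=> s t st; have [_ _ w_le] := w_cap.
by apply: w_le => // om /= /(le_trans st).
Qed.

Lemma capacity_tail_ge0 s : 0 <= capacity_tail s.
Proof. by have [w0 _ w_le] := w_cap; rewrite -w0; apply: w_le. Qed.

Lemma capacity_tail_function M : (forall om, `|X om| <= M) ->
  tail_function capacity_tail M.
Proof.
have [w0 w1 w_le] := w_cap; move=> XM; split.
- exact: capacity_tail_nonincreasing.
- by move=> s; rewrite capacity_tail_ge0 -w1; apply: w_le.
- move=> s sM; rewrite -w1; congr w.
  apply/seteqP; split => // om _ /=; apply: le_trans sM _.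
  by have := XM om; rewrite ler_norml => /andP[].
- move=> s Ms; rewrite -w0; congr w.
  apply/seteqP; split => // om /= sX; move: Ms; rewrite ltNge.
  by have := XM om; rewrite ler_norml => /andP[_ /(le_trans sX) ->].
Qed.

Lemma choquet_pos_part x :
  choquet w (fun om => Num.max (X om - x) 0) = stop_loss capacity_tail x.
Proof.
have [_ w1 _] := w_cap.
rewrite /choquet (@eq_Rintegral _ _ _ mu _ (fun=> 0)); last first.
  move=> y; rewrite inE /= in_itv /= => y0.
  have -> : [set om | y <= Num.max (X om - x) 0] = setT.
    by apply/seteqP; split => // om _ /=; rewrite le_max (ltW y0) orbT.
  by rewrite w1 subrr.
have level_shift y : 0 < y ->
    [set om | y <= Num.max (X om - x) 0] = [set om | y + x <= X om].
  move=> y0; apply/seteqP; split => om /=; last by rewrite le_max lerBrDr => ->.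
  by rewrite le_max (leNgt y 0) y0 orbF lerBrDr.
have tail_shift_ni : nonincreasing_fun (capacity_tail \o shift x).
  move=> s t st; apply: capacity_tail_nonincreasing.
  by rewrite /= /shift lerD2r.
rewrite Rintegral_cst // mul0r add0r /stop_loss /Rintegral; congr fine.
rewrite -integral_itv_obnd_cbnd; last first.
  apply/measurable_EFinP.
  apply: eq_measurable_fun (nonincreasing_measurable _ tail_shift_ni) => // y.
  by rewrite inE /= in_itv /= andbT => y0; rewrite /capacity_tail level_shift.
have -> : `]0, +oo[%classic = shift x @^-1` `]x, +oo[.
  by apply/seteqP; split => y; rewrite /= /shift !in_itv /= !andbT ltrDr.
rewrite -(@ge0_integral_shift R x _ (EFin \o capacity_tail)) //.
- apply: eq_integral => y; rewrite inE /= in_itv /= andbT /shift => xy.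
  by rewrite /capacity_tail level_shift // -(ltrD2r x) add0r.
- apply/measurable_EFinP.
  exact: nonincreasing_measurable capacity_tail_nonincreasing.
- by move=> u _; rewrite lee_fin capacity_tail_ge0.
Qed.

End capacity_tail.

Unset Implicit Arguments.

Theorem theorem3 (d : measure_display) (T : measurableType d) (R : realType)
  (w : set T -> R) (X : T -> R) (alpha : R) :
  is_capacity w ->
  measurable_fun setT X ->
  (exists M : R, forall om, `|X om| <= M) ->
  0 < alpha < 1 ->
  [set x : R | forall y : R, ES_objective w alpha X x <= ES_objective w alpha X y]
    = `[VaR w alpha X, VaRbar w alpha X]%classic /\
  ((exists x : R, ES_objective w alpha X x = ES w alpha X) /\
   (forall y : R, ES w alpha X <= ES_objective w alpha X y)).
Proof.
move=> w_cap mX [M XM] /andP[a0 a1].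
have G_tail := capacity_tail_function w_cap mX XM.
pose K := stop_loss (capacity_tail w X).
have obj x : ES_objective w alpha X x = alpha^-1 * (alpha * x + K x).
  by rewrite /ES_objective choquet_pos_part // mulrDr mulrA mulVf ?gt_eqF ?mul1r.
have le_obj x y : (ES_objective w alpha X x <= ES_objective w alpha X y) =
    (alpha * x + K x <= alpha * y + K y).
  by rewrite !obj ler_pM2l ?invr_gt0.
have ES_VaR : ES w alpha X = ES_objective w alpha X (VaR w alpha X).
  by rewrite obj /ES (Rintegral_lower_quantile G_tail a0 a1).
split.
  rewrite -(argmin_stop_loss G_tail a0 a1).
  by apply/seteqP; split => x /= xmin y; [rewrite -le_obj | rewrite le_obj].
split; first by exists (VaR w alpha X).
move=> y; rewrite ES_VaR le_obj.
exact: (stop_loss_min_lower_quantile G_tail (ltW a0) a1 y).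
Qed.
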